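(* Let $K$ be an imaginary quadratic field, $O$ an order in $K$, $\mathfrak{m}\subseteq O$ a proper ideal, $\Lambda\subseteq\mathbb{Z}$ multiplicatively closed, $H=P_{O,\Lambda}(\mathfrak{m})$, and $\pi:\mathrm{cl}_H\to\mathrm{cl}_O$ the natural surjection. Let $\Gamma$ be a subgroup of $\mathrm{GL}(O/\mathfrak{m})$ with $\Gamma\supseteq\Gamma_{O,\Lambda}(\mathfrak{m})$. Then $\ker\pi$ acts on the set $$X_\Gamma:=\{M\Gamma: M\in\mathrm{GL}(O/\mathfrak{m})\}/\sim,$$ where $\sim$ identifies left cosets up to left multiplication by $\mu_u$ for $u\in O^\times$; namely, identifying $\ker\pi$ with classes of $[\alpha]\in(O/\mathfrak{m})^\times$ modulo multiplication by the images of $\Lambda$ and $O^\times$ (via $[\alpha]\mapsto[\alpha O]$), the rule $M\Gamma\mapsto\mu_\alpha M\Gamma$ is a well-defined action.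
   Context: $\mathrm{GL}(O/\mathfrak{m})$ is the group of group automorphisms of $O/\mathfrak{m}$, and $\mu_\alpha$ denotes multiplication by $\alpha$ on $O/\mathfrak{m}$. Proper ideal: $\{\alpha\in K:\alpha\mathfrak{m}\subseteq\mathfrak{m}\}=O$. $\mathrm{cl}_O$ is the class group of proper fractional ideals modulo principal ones. $I_O(\mathfrak{m})$ is generated by proper integral ideals coprime to $\mathfrak{m}$, $\mathrm{cl}_H=I_O(\mathfrak{m})/H$, and $\pi$ sends the class of $\mathfrak{a}$ to its class in $\mathrm{cl}_O$. For $\alpha,\beta\in K^\times$, $\alpha\equiv\beta\bmod\mathfrak{m}$ means $\alpha_1\beta_2-\alpha_2\beta_1\in\mathfrak{m}$ whenever $\alpha=\alpha_1/\alpha_2,\beta=\beta_1/\beta_2$ with $\alpha_i,\beta_i\in O$. $P_{O,\Lambda}(\mathfrak{m})=\{\alpha O:\alpha\equiv\lambda\bmod\mathfrak{m}$ for some $\lambda\in\Lambda$ coprime to $N(\mathfrak{m})\}$ and $\Gamma_{O,\Lambda}(\mathfrak{m})=\{\mu_\alpha:\alpha O\in P_{O,\Lambda}(\mathfrak{m})\}$. By an exact sequence $1\to O^\times/(O^\times\cap(\Lambda+\mathfrak{m}))\to(O/\mathfrak{m})^\times/\Delta\to\mathrm{cl}_H\to\mathrm{cl}_O\to1$ (with $\Delta$ the image of $\Lambda$ in $(O/\mathfrak{m})^\times$), $\ker\pi$ is the image of $(O/\mathfrak{m})^\times$ under $[\alpha]\mapsto[\alpha O]$. *)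

(* Setoid-style formalization: the imaginary quadratic field,
   the order O, the ideal m, the quotient O/m and the group GL(O/m) are all
   represented inside algC, with quotients handled by explicit congruences. *)
From HB Require Import structures.
From mathcomp Require Import all_boot all_order all_algebra all_field.
Set Implicit Arguments. Unset Strict Implicit. Unset Printing Implicit Defensive.
Import Order.TTheory GRing.Theory Num.Theory.
Local Open Scope ring_scope.

Definition quadK (d : nat) (x : algC) : Prop :=
  exists a b : rat, x = ratr a + ratr b * sqrtC (- (d%:R)).

Definition is_quad_order (d : nat) (O : algC -> Prop) : Prop :=
  [/\ (forall x, O x -> quadK d x),
      O 1,
      (forall x y, O x -> O y -> O (x - y)),
      (forall x y, O x -> O y -> O (x * y)) &
      exists a b : algC,
        (forall x, O x <-> exists i j : int, x = i%:~R * a + j%:~R * b) /\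
        (forall x, quadK d x -> exists p q : rat, x = ratr p * a + ratr q * b)].

Definition is_ideal_of (O m : algC -> Prop) : Prop :=
  [/\ (forall x, m x -> O x), m 0,
      (forall x y, m x -> m y -> m (x - y)) &
      (forall r x, O r -> m x -> m (r * x))].

(* proper ideal: {alpha in K : alpha m ⊆ m} = O *)
Definition invertible_ideal (d : nat) (O m : algC -> Prop) : Prop :=
  is_ideal_of O m /\
  forall a, quadK d a -> ((forall x, m x -> m (a * x)) <-> O a).

Definition unitO (O : algC -> Prop) (u : algC) : Prop :=
  [/\ O u, u != 0 & O u^-1].

Definition unit_mod (O m : algC -> Prop) (a : algC) : Prop :=
  O a /\ exists2 b, O b & m (a * b - 1).

Definition norm_is (O m : algC -> Prop) (n : nat) : Prop :=
  exists s : seq algC,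
  [/\ size s = n,
      (forall i, (i < n)%N -> O (nth 0 s i)),
      (forall i j, (i < n)%N -> (j < n)%N -> m (nth 0 s i - nth 0 s j) -> i = j) &
      (forall x, O x -> exists2 i, (i < n)%N & m (x - nth 0 s i))].

Definition coprime_norm (O m : algC -> Prop) (l : int) : Prop :=
  exists n, norm_is O m n /\ coprimez l n%:Z.

Definition congK (O m : algC -> Prop) (a b : algC) : Prop :=
  forall a1 a2 b1 b2, O a1 -> O a2 -> O b1 -> O b2 -> a2 != 0 -> b2 != 0 ->
    a = a1 / a2 -> b = b1 / b2 -> m (a1 * b2 - a2 * b1).

(* the principal ideal alpha O lies in P_{O,Lambda}(m) *)
Definition in_P (d : nat) (O m : algC -> Prop) (Lam : int -> Prop) (a : algC) : Prop :=
  exists b, [/\ quadK d b, b != 0,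
    (forall x, (exists2 o, O o & x = a * o) <-> (exists2 o, O o & x = b * o)) &
    exists l, [/\ Lam l, coprime_norm O m l & congK O m b l%:~R]].

(* GL(O/m): a function f represents the group automorphism [x] |-> [f x] of
   the additive group O/m (well defined, additive, bijective modulo m). *)
Definition GLm (O m : algC -> Prop) (f : algC -> algC) : Prop :=
  [/\ (forall x, O x -> O (f x)),
      (forall x y, O x -> O y -> m (x - y) -> m (f x - f y)),
      (forall x y, O x -> O y -> m (f (x + y) - (f x + f y))),
      (forall x y, O x -> O y -> m (f x - f y) -> m (x - y)) &
      (forall y, O y -> exists2 x, O x & m (f x - y))].

Definition gl_eq (O m : algC -> Prop) (f g : algC -> algC) : Prop :=
  forall x, O x -> m (f x - g x).

Definition GL_subgroup (O m : algC -> Prop) (Gam : (algC -> algC) -> Prop) : Prop :=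
  [/\ (forall f, Gam f -> GLm O m f),
      (forall f g, Gam f -> GLm O m g -> gl_eq O m f g -> Gam g),
      Gam (fun x => x),
      (forall f g, Gam f -> Gam g -> Gam (f \o g)) &
      (forall f g, Gam f -> GLm O m g -> gl_eq O m (f \o g) (fun x => x) -> Gam g)].

Definition mu (a : algC) : algC -> algC := fun x => a * x.

(* f represents mu_alpha, multiplication by alpha = a1/a2 in K on O/m
   (a1, a2 in O, a2 invertible mod m) *)
Definition is_mu (O m : algC -> Prop) (a : algC) (f : algC -> algC) : Prop :=
  exists a1 a2, [/\ O a1, O a2, a2 != 0, a = a1 / a2 &
     unit_mod O m a2 /\ forall x, O x -> m (a2 * f x - a1 * x)].

Definition GammaOL (d : nat) (O m : algC -> Prop) (Lam : int -> Prop)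
    (f : algC -> algC) : Prop :=
  GLm O m f /\
  exists a, [/\ quadK d a, a != 0, in_P d O m Lam a & is_mu O m a f].

(* ker pi identified with (O/m)^x modulo the images of Lambda (elements
   coprime to N(m)) and of O^x: equality of classes of a and b *)
Definition kerpi_rel (O m : algC -> Prop) (Lam : int -> Prop) (a b : algC) : Prop :=
  exists l u, [/\ Lam l, coprime_norm O m l, unitO O u & m (a - l%:~R * u * b)].

(* X_Gamma: M Gamma ~ N Gamma iff N Gamma = mu_u M Gamma for some u in O^x *)
Definition X_rel (O m : algC -> Prop) (Gam : (algC -> algC) -> Prop)
    (M N : algC -> algC) : Prop :=
  exists u g, [/\ unitO O u, Gam g & gl_eq O m N (mu u \o M \o g)].

From HB Require Import structures.
From mathcomp Require Import all_boot all_order all_algebra all_field.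
From mathcomp Require Import ring.
Import Order.TTheory GRing.Theory Num.Theory.
Set Implicit Arguments. Unset Strict Implicit.
Local Open Scope ring_scope.

(* Let a = l u b mod m with l in Lambda coprime to N(m) and u in O^x, and let
   N = mu_u0 M g with g in Gamma.  Since #(O/m) = N(m) kills O/m, l has an
   inverse l' modulo m, and mu_l' lies in Gamma because mu_l does (l O is in
   P_{O,Lambda}(m)).  Additivity of M gives l M(l' y) = M(y) mod m, whence
   mu_b N = mu_(u0/u) mu_a M (mu_l' g): the action of [a] on X_Gamma depends
   only on the class of [a] in ker pi and on the class of M Gamma.  The action
   axioms hold on the nose. *)

Definition is_subring (O : algC -> Prop) : Prop :=
  [/\ O 1, (forall x y, O x -> O y -> O (x - y)) &
      (forall x y, O x -> O y -> O (x * y))].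

Lemma quad_order_subring d O : is_quad_order d O -> is_subring O.
Proof. by case=> _ ? ? ? _; split. Qed.

Section SubringIdeal.
Variables (O m : algC -> Prop).
Hypotheses (HO : is_subring O) (Hm : is_ideal_of O m).

Lemma subring1 : O 1. Proof. by case: HO. Qed.
Lemma subringB x y : O x -> O y -> O (x - y). Proof. by case: HO => _ + _; apply. Qed.
Lemma subringM x y : O x -> O y -> O (x * y). Proof. by case: HO => _ _; apply. Qed.
Lemma subring0 : O 0. Proof. by rewrite -(subrr 1); apply: subringB; apply: subring1. Qed.
Lemma subringN x : O x -> O (- x). Proof. by rewrite -sub0r; apply/subringB/subring0. Qed.

Lemma subringD x y : O x -> O y -> O (x + y).
Proof. by move=> Ox Oy; rewrite -[y]opprK; apply/subringB/subringN. Qed.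

Lemma subring_nat n : O n%:R.
Proof.
by elim: n => [|n IHn]; [exact: subring0 | rewrite mulrS; apply/subringD/IHn/subring1].
Qed.

Lemma subring_int (z : int) : O z%:~R.
Proof.
by case: z => n; rewrite ?NegzE ?mulrNz; [|apply: subringN]; apply: subring_nat.
Qed.

Lemma unitO1 : unitO O 1.
Proof. by split; rewrite ?invr1 ?oner_neq0 //; apply: subring1. Qed.

Lemma ideal0 : m 0. Proof. by case: Hm. Qed.
Lemma idealB x y : m x -> m y -> m (x - y). Proof. by case: Hm => _ _ + _; apply. Qed.
Lemma idealMl r x : O r -> m x -> m (r * x). Proof. by case: Hm => _ _ _; apply. Qed.
Lemma idealN x : m x -> m (- x). Proof. by rewrite -sub0r; apply/idealB/ideal0. Qed.

Lemma idealD x y : m x -> m y -> m (x + y).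
Proof. by move=> mx my; rewrite -[y]opprK; apply/idealB/idealN. Qed.

Lemma ideal_eq x y : m x -> x = y -> m y. Proof. by move=> + <-. Qed.

Lemma ideal1_all : m 1 -> forall x, O x -> m x.
Proof. by move=> m1 x Ox; rewrite -[x]mulr1; apply: idealMl. Qed.

(* The translation x |-> x + 1 permutes a system of representatives of O/m,
   so summing s_i + 1 - s_(sigma i) over all representatives leaves n. *)
Lemma norm_is_mem n : norm_is O m n -> m n%:R.
Proof.
case=> s [_ sO s_inj s_cover].
have /fin_all_exists[sigma sigmaP] :
    forall i : 'I_n, exists j : 'I_n, m (nth 0 s i + 1 - nth 0 s j).
  move=> i.
  have [j lt_jn mj] := s_cover _ (subringD (sO _ (ltn_ord i)) subring1).
  by exists (Ordinal lt_jn).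
have sigma_inj : injective sigma.
  move=> i j eq_ij; apply/val_inj/s_inj; rewrite ?ltn_ord //.
  by apply: (ideal_eq (idealB (sigmaP i) (sigmaP j))); rewrite eq_ij; ring.
have : m (\sum_(i < n) (nth 0 s i + 1 - nth 0 s (sigma i))).
  by apply: big_ind => [|x y|i _]; [exact: ideal0 | exact: idealD | exact: sigmaP].
rewrite sumrB big_split /=.
have -> : \sum_(i < n) nth 0 s (sigma i) = \sum_(i < n) nth 0 s i.
  by rewrite [RHS](reindex_inj sigma_inj).
by rewrite sumr_const card_ord addrAC subrr add0r.
Qed.

Lemma coprime_norm_inv (l : int) :
  coprime_norm O m l -> exists l' : int, m ((l * l')%:~R - 1).
Proof.
case=> n [normn /eqP coprime_ln].
have [u [v]] := Bezoutz l n%:Z; rewrite coprime_ln => bezout.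
have bezoutC : u%:~R * l%:~R + v%:~R * n%:R = 1 :> algC.
  by rewrite -[n%:R]/(n%:Z%:~R) -!rmorphM -rmorphD bezout.
exists u; apply: (ideal_eq (idealMl (subring_int (- v)) (norm_is_mem normn))).
by rewrite rmorphM rmorphN -[X in _ = _ - X]bezoutC; ring.
Qed.

Lemma unit_mod_int (l l' : int) : m ((l * l')%:~R - 1) -> unit_mod O m l%:~R.
Proof.
by move=> inv_l; split; [|exists l'%:~R; rewrite -?rmorphM //]; apply: subring_int.
Qed.

Lemma unit_mod1 : unit_mod O m 1.
Proof.
split; first exact: subring1.
by exists 1; rewrite ?mulr1 ?subrr; [exact: subring1 | exact: ideal0].
Qed.

Lemma unitO_div u v : unitO O u -> unitO O v -> unitO O (u / v).
Proof.
case=> Ou u_neq0 Ou' [Ov v_neq0 Ov']; split; first exact: subringM.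
  by rewrite mulf_neq0 ?invr_eq0.
by rewrite invfM invrK; apply: subringM.
Qed.

Lemma GLm_id : GLm O m (fun x => x).
Proof.
split=> // [x y _ _|y Oy]; first by rewrite subrr; exact: ideal0.
by exists y => //; rewrite subrr; exact: ideal0.
Qed.

Lemma GLm_mu_comp a M : unit_mod O m a -> GLm O m M -> GLm O m (mu a \o M).
Proof.
case=> Oa [b Ob mab] [MO Mwd Madd Minj Msurj]; rewrite /mu; split => /=.
- by move=> x Ox; apply/subringM/MO.
- move=> x y Ox Oy /(Mwd x y Ox Oy) /(idealMl Oa) mMxy.
  by apply: (ideal_eq mMxy); ring.
- by move=> x y Ox Oy; apply: (ideal_eq (idealMl Oa (Madd x y Ox Oy))); ring.
- move=> x y Ox Oy mxy; apply: Minj => //.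
  have OMxy : O (M x - M y) by apply: subringB; apply: MO.
  by apply: (ideal_eq (idealB (idealMl Ob mxy) (idealMl OMxy mab))); ring.
- move=> y Oy; have [x Ox mx] := Msurj (b * y) (subringM Ob Oy).
  by exists x => //; apply: (ideal_eq (idealD (idealMl Oa mx) (idealMl Oy mab))); ring.
Qed.

Section GLmAdditive.
Variable M : algC -> algC.
Hypothesis HM : GLm O m M.

Lemma GLm0 : m (M 0).
Proof.
case: HM => _ _ Madd _ _; have := Madd 0 0 subring0 subring0.
by rewrite addr0 => /idealN mM0; apply: (ideal_eq mM0); ring.
Qed.

Lemma GLm_natmul (k : nat) y : O y -> m (M (k%:R * y) - k%:R * M y).
Proof.
move=> Oy; elim: k => [|k IHk]; first by rewrite !mul0r subr0; exact: GLm0.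
case: HM => _ _ Madd _ _.
have Madd_y := Madd y (k%:R * y) Oy (subringM (subring_nat k) Oy).
by apply: (ideal_eq (idealD Madd_y IHk)); rewrite mulrS mulrDl mul1r; ring.
Qed.

Lemma GLm_intmul (k : int) y : O y -> m (M (k%:~R * y) - k%:~R * M y).
Proof.
move=> Oy; case: k => k; first exact: GLm_natmul.
case: HM => _ _ Madd _ _; set z := k.+1%:R * y.
have Oz : O z by apply/subringM/Oy/subring_nat.
have := Madd z (- z) Oz (subringN Oz); rewrite subrr => M_opp.
apply: (ideal_eq (idealB (idealB GLm0 M_opp) (GLm_natmul k.+1 Oy))).
by rewrite NegzE mulrNz !mulNr; ring.
Qed.

Lemma GLm_kerpi_congr a b (l l' : int) u y : O b -> O u -> O y ->
  m (a - l%:~R * u * b) -> m ((l * l')%:~R - 1) ->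
  m (u * b * M y - a * M (l'%:~R * y)).
Proof.
move=> Ob Ou Oy mab inv_l; case: (HM) => MO Mwd _ _ _.
have Ol'y : O (l'%:~R * y) by apply/subringM/Oy/subring_int.
have M_ll'y : m (M (l%:~R * (l'%:~R * y)) - M y).
  apply: Mwd => //; first by apply/subringM/Ol'y/subring_int.
  by apply: (ideal_eq (idealMl Oy inv_l)); rewrite rmorphM /=; ring.
have M_intmul := GLm_intmul l Ol'y.
apply: (ideal_eq (idealD (idealN (idealMl (MO _ Ol'y) mab))
                         (idealMl (subringM Ou Ob) (idealB M_intmul M_ll'y)))).
ring.
Qed.

End GLmAdditive.

Lemma gl_eq_X_rel Gam M N : Gam (fun x => x) -> gl_eq O m N M -> X_rel O m Gam M N.
Proof.
move=> Gam1 eqNM; exists 1, (fun x => x); split=> //; first exact: unitO1.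
by move=> x Ox; rewrite /mu /= mul1r; apply: eqNM.
Qed.

Lemma subgroup_mu_inv Gam (l l' : int) : GL_subgroup O m Gam ->
  Gam (mu l%:~R) -> m ((l * l')%:~R - 1) -> Gam (mu l'%:~R).
Proof.
case=> _ _ _ _ GamV Gam_l inv_l; apply: (GamV _ _ Gam_l).
  by apply: GLm_mu_comp GLm_id; apply: (@unit_mod_int _ l); rewrite mulrC.
move=> x Ox; rewrite /mu /=; apply: (ideal_eq (idealMl Ox inv_l)).
by rewrite rmorphM; ring.
Qed.

Lemma congKxx a : congK O m a a.
Proof.
move=> a1 a2 b1 b2 _ _ _ _ a2_neq0 b2_neq0 -> /eqP.
by rewrite eqr_div // => /eqP eq_ab; apply: (ideal_eq ideal0); rewrite eq_ab; ring.
Qed.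

Lemma quadK_int d (z : int) : quadK d z%:~R.
Proof. by exists z%:~R, 0; rewrite rmorph0 mul0r addr0 rmorph_int. Qed.

Lemma GammaOL_mu_int d Lam (l : int) : Lam l -> coprime_norm O m l -> l != 0 ->
  GammaOL d O m Lam (mu l%:~R).
Proof.
move=> Ll cop_l l_neq0; have [l' inv_l] := coprime_norm_inv cop_l.
have lC_neq0 : l%:~R != 0 :> algC by rewrite intr_eq0.
split; first exact: GLm_mu_comp (unit_mod_int inv_l) GLm_id.
exists l%:~R; split=> //; first exact: quadK_int.
  exists l%:~R; split=> //; first exact: quadK_int.
  by exists l; split=> //; exact: congKxx.
exists l%:~R, 1; split; rewrite ?divr1 ?oner_neq0 //; last split.
- exact: subring_int.
- exact: subring1.
- exact: unit_mod1.
by move=> x Ox; rewrite /mu mul1r subrr; exact: ideal0.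
Qed.

Lemma X_rel_mu_kerpi d Lam Gam a b M N :
  GL_subgroup O m Gam -> (forall f, GammaOL d O m Lam f -> Gam f) ->
  unit_mod O m a -> unit_mod O m b -> kerpi_rel O m Lam a b ->
  GLm O m M -> GLm O m N -> X_rel O m Gam M N ->
  X_rel O m Gam (mu a \o M) (mu b \o N).
Proof.
move=> HGam GammaOL_Gam [Oa _] [Ob _] [l [u [Ll cop_l uu mab]]] HM HN.
case=> u0 [g [uu0 Gg mN]].
have [Gam_GL _ Gam1 GamM _] := HGam.
have [MO _ _ _ _] := HM; have [NO _ _ _ _] := HN; have [gO _ _ _ _] := Gam_GL g Gg.
have [l' inv_l] := coprime_norm_inv cop_l.
have [l0 | l_neq0] := eqVneq l 0.
  (* l = 0 is coprime to N(m) only when m = O, and then all maps agree. *)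
  apply: gl_eq_X_rel => // x Ox; apply: ideal1_all.
    by apply: (ideal_eq (idealN inv_l)); rewrite l0 mul0r; ring.
  by apply: subringB; apply: subringM => //; [apply: NO | apply: MO].
have Gam_l' : Gam (mu l'%:~R).
  exact: subgroup_mu_inv HGam (GammaOL_Gam _ (GammaOL_mu_int d Ll cop_l l_neq0)) inv_l.
exists (u0 / u), (mu l'%:~R \o g); split; [exact: unitO_div | exact: GamM |].
move=> x Ox; have [Ou u_neq0 Ou'] := uu; have [Ou0 _ _] := uu0.
have := GLm_kerpi_congr HM Ob Ou (gO x Ox) mab inv_l.
move/(idealMl (subringM Ou0 Ou')) => mM.
apply: (ideal_eq (idealD (idealMl Ob (mN x Ox)) mM)).
by rewrite /mu /=; field.
Qed.

End SubringIdeal.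

Unset Implicit Arguments.

Theorem corollary3p1 (d : nat) (O m : algC -> Prop) (Lam : int -> Prop)
    (Gam : (algC -> algC) -> Prop) :
  (0 < d)%N -> is_quad_order d O -> invertible_ideal d O m ->
  Lam 1 -> (forall a b, Lam a -> Lam b -> Lam (a * b)) ->
  GL_subgroup O m Gam -> (forall f, GammaOL d O m Lam f -> Gam f) ->
  [/\ (forall a M, unit_mod O m a -> GLm O m M -> GLm O m (mu a \o M)),
      (forall a b M N, unit_mod O m a -> unit_mod O m b -> kerpi_rel O m Lam a b ->
         GLm O m M -> GLm O m N -> X_rel O m Gam M N ->
         X_rel O m Gam (mu a \o M) (mu b \o N)),
      (forall M, GLm O m M -> X_rel O m Gam (mu 1 \o M) M) &
      (forall a b M, unit_mod O m a -> unit_mod O m b -> GLm O m M ->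
         X_rel O m Gam (mu a \o (mu b \o M)) (mu (a * b) \o M))].
Proof.
move=> _ /quad_order_subring HO [Hm _] _ _ HGam GammaOL_Gam.
have [_ _ Gam1 _ _] := HGam.
split.
- by move=> a M; apply: GLm_mu_comp.
- by move=> a b M N; apply: X_rel_mu_kerpi GammaOL_Gam.
- move=> M _; apply: gl_eq_X_rel => // x _.
  by apply: (ideal_eq (ideal0 Hm)); rewrite /mu /=; ring.
- move=> a b M _ _ _; apply: gl_eq_X_rel => // x _.
  by apply: (ideal_eq (ideal0 Hm)); rewrite /mu /=; ring.
Qed.
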